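(* Let $I$ be a countable index set with nested finite subsets $I_1\subset I_2\subset\cdots$, $\bigcup_nI_n=I$, let $W$ be a compact Hausdorff space and $m:\mathcal{F}[I]\to C^*(W)$ a frame measure function. Let $\mathcal{F}\in\mathcal{F}[I]$. Then: (1) if $c=\lim_{i\to\infty}a_i(\mathcal{F})$ exists then $m(\mathcal{F})$ is the constant function with value $c$; (2) $\liminf_i a_i(\mathcal{F})\le m(\mathcal{F})(w)\le\limsup_i a_i(\mathcal{F})$ for all $w\in W$; (3) there exist $v,w\in W$ (depending on $\mathcal{F}$) with $m(\mathcal{F})(v)=\liminf_i a_i(\mathcal{F})$ and $m(\mathcal{F})(w)=\limsup_i a_i(\mathcal{F})$.
   Context: $\mathcal{F}[I]$: families $\{f_i\}_{i\in I}$ in a separable Hilbert space that are frames for their closed span; $\tilde f_i=S^{-1}f_i$ canonical dual; $b_n(\mathcal{F})=\sum_{i\in I_n}\langle f_i,\tilde f_i\rangle$, $a_n(\mathcal{F})=b_n(\mathcal{F})/|I_n|$. $\mathbf{x}\approx\mathbf{y}$ iff $\lim_n(x_n-y_n)/|I_n|=0$; for nonnegative sequences $\mathbf{y}\leqq\mathbf{x}$ iff $\liminf_n(x_n-y_n)/|I_n|\ge0$. A nonnegative sequence $\mathbf{x}$ is frame compatible if $0\le x_1\le|I_1|$, $0\le x_i-x_{i-1}\le|I_i\setminus I_{i-1}|$; $X$ the set of these, $X^+=\{c\mathbf{x}:\mathbf{x}\in X,c\ge0\}$, $X^{\mathbb{R}}=\{\mathbf{x}^1-\mathbf{x}^2:\mathbf{x}^j\in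 X^+\}$. $C^*(W)$: real continuous functions on $W$. A sequence measure function is a linear $m:X^{\mathbb{R}}\to C^*(W)$ with: $m(\mathbf{x})=m(\mathbf{y})$ iff $\mathbf{x}\approx\mathbf{y}$ ($\mathbf{x},\mathbf{y}\in X^{\mathbb{R}}$); $m(\mathbf{x})\le m(\mathbf{y})$ pointwise iff $\mathbf{x}\leqq\mathbf{y}$ ($\mathbf{x},\mathbf{y}\in X^+$); $m(\mathbf{i})=1$ for $\mathbf{i}=(|I_1|,|I_2|,\dots)$. A frame measure function is $\mathcal{F}\mapsto m(b(\mathcal{F}))$ for a sequence measure function $m$. *)

From HB Require Import structures.
From mathcomp Require Import all_boot all_order all_algebra.
From mathcomp Require Import all_classical all_reals all_analysis.
From mathcomp Require Import complex finmap.

Set Implicit Arguments.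
Unset Strict Implicit.
Unset Printing Implicit Defensive.

Import Order.TTheory GRing.Theory Num.Theory.
Import numFieldNormedType.Exports.

Local Open Scope classical_set_scope.
Local Open Scope ring_scope.

Section Hilbert.
Context {R : realType} {H : lmodType R[i]} (ip : H -> H -> R[i]).

Definition sqnorm (x : H) : R := complex.Re (ip x x).
Definition hnorm (x : H) : R := Num.sqrt (sqnorm x).

Definition cabs2 (z : R[i]) : R := complex.Re z ^+ 2 + complex.Im z ^+ 2.

Definition is_separable_hilbert : Prop :=
  [/\ (forall (a : R[i]) (x y z : H), ip (a *: x + y) z = a * ip x z + ip y z)
      /\ (forall x y : H, ip y x = conjc (ip x y)),
      (forall x : H, 0 <= sqnorm x),
      (forall x : H, ip x x = 0 -> x = 0),
      (forall u : nat -> H,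
         (forall e : R, 0 < e -> exists N : nat,
            forall n k, (N <= n)%N -> (N <= k)%N -> hnorm (u n - u k) < e) ->
         exists l : H, (fun n => hnorm (u n - l)) @ \oo --> (0 : R))
    & (exists d : nat -> H, forall (x : H) (e : R), 0 < e ->
         exists n, hnorm (x - d n) < e)].

Context {I : choiceType}.

Definition cspan (f : I -> H) (x : H) : Prop :=
  forall e : R, 0 < e -> exists (s : {fset I}) (c : I -> R[i]),
    hnorm (x - \sum_(i <- s) c i *: f i) < e.

Definition is_frame_for_span (f : I -> H) : Prop :=
  exists A B : R, [/\ 0 < A, 0 < B &
    forall x, cspan f x ->
      ((A * sqnorm x)%:E <= \esum_(i in [set: I]) (cabs2 (ip x (f i)))%:E)%E /\
      (\esum_(i in [set: I]) (cabs2 (ip x (f i)))%:E <= (B * sqnorm x)%:E)%E].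

(* ft is the canonical dual S^{-1} f of f, where S g = sum_j <g,f_j> f_j is
   the frame operator on the closed span (the series converges
   unconditionally; we evaluate it along the exhaustion J of I) *)
Definition is_canonical_dual (J : nat -> {fset I}) (f ft : I -> H) : Prop :=
  forall i, cspan f (ft i) /\
    (fun n => hnorm (\sum_(j <- J n) ip (ft i) (f j) *: f j - f i)) @ \oo
      --> (0 : R).

(* b_n(F) = sum_{i in I_n} <f_i, ft_i>  (this number is real) *)
Definition frame_b (J : nat -> {fset I}) (f ft : I -> H) (n : nat) : R :=
  \sum_(i <- J n) complex.Re (ip (f i) (ft i)).

End Hilbert.

Section SeqMeasure.
Context {R : realType} {I : choiceType} (J : nat -> {fset I}).

Definition cardJ (n : nat) : R := (#|` J n|)%fset%:R.

Definition frame_compatible (x : nat -> R) : Prop :=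
  (0 <= x 0%N <= cardJ 0%N) /\
  forall n, 0 <= x n.+1 - x n <= (#|` (J n.+1 `\` J n)%fset |)%fset%:R.

Definition XP (x : nat -> R) : Prop :=
  exists (y : nat -> R) (c : R),
    [/\ frame_compatible y, 0 <= c & x = (fun n => c * y n)].

Definition XR (x : nat -> R) : Prop :=
  exists y z : nat -> R, [/\ XP y, XP z & x = (fun n => y n - z n)].

Definition seq_approx (x y : nat -> R) : Prop :=
  (fun n => (x n - y n) / cardJ n) @ \oo --> (0 : R).

Definition seq_leqq (y x : nat -> R) : Prop :=
  0 <= limn_inf (fun n => (x n - y n) / cardJ n).

Definition is_seq_measure {W : topologicalType}
    (m : (nat -> R) -> W -> R) : Prop :=
  [/\ (forall x, XR x -> continuous (m x)),
      (forall (x y : nat -> R) (a b : R), XR x -> XR y ->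
         m (fun n => a * x n + b * y n) = (fun w => a * m x w + b * m y w)),
      (forall x y, XR x -> XR y -> (m x = m y <-> seq_approx x y)),
      (forall x y, XP x -> XP y ->
         ((forall w, m x w <= m y w) <-> seq_leqq x y))
    & m cardJ = (fun _ => 1)].

End SeqMeasure.

(* For the canonical dual, f_i = sum_j <ft_i, f_j> f_j, hence
   sum_(j in I_n) |<ft_i, f_j>|^2 tends to c := Re <f_i, ft_i>; these partial
   sums are nonnegative and eventually at least |<ft_i, f_i>|^2 >= c^2, so
   0 <= c <= 1.  Consequently b(F) is frame compatible and 0 <= a_n(F) <= 1.
   A sequence measure function maps r |I_n| to the constant r, so monotonicity
   gives: m(x) >= r everywhere iff r |I_n| <== x iff r <= liminf x_n / |I_n|,
   and dually m(x) <= r iff limsup x_n / |I_n| <= r.  Taking r = liminf and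
   r = limsup gives (2), which implies (1).  W is nonempty (otherwise m(0) = m(i)
   although 0 and i are not equivalent), so the continuous m(x) attains its
   minimum r on the compact W; then r <= liminf <= r, and dually for the maximum,
   which is (3). *)

From HB Require Import structures.
From mathcomp Require Import all_boot all_order all_algebra.
From mathcomp Require Import all_classical all_reals all_analysis.
From mathcomp Require Import complex finmap.
From mathcomp Require Import lra.

Import Order.TTheory GRing.Theory Num.Theory.
Import numFieldNormedType.Exports.
Local Open Scope classical_set_scope.
Local Open Scope ring_scope.

Section Complex.
Context {R : realType}.
Implicit Types w : R[i].

Lemma cabs2_ge0 w : 0 <= cabs2 w.
Proof. by case: w => w1 w2; rewrite /cabs2 /=; nra. Qed.

Lemma Re_mul_conjc w : complex.Re (w * conjc w) = cabs2 w.
Proof. by case: w => w1 w2; rewrite /cabs2 /=; lra. Qed.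

Lemma sqr_Re_le_cabs2 w : complex.Re w ^+ 2 <= cabs2 w.
Proof. by case: w => w1 w2; rewrite /cabs2 /= lerDl sqr_ge0. Qed.

Lemma cabs2_conjc w : cabs2 (conjc w) = cabs2 w.
Proof. by case: w => w1 w2; rewrite /cabs2 /= sqrrN. Qed.

End Complex.

Section InnerProduct.
Context {R : realType} {H : lmodType R[i]} {ip : H -> H -> R[i]}.
Hypothesis ip_linear : forall a x y z, ip (a *: x + y) z = a * ip x z + ip y z.
Hypothesis ip_conj : forall x y, ip y x = conjc (ip x y).
Hypothesis sqnorm_ge0 : forall x, 0 <= sqnorm ip x.

Lemma ip0l z : ip 0 z = 0.
Proof.
have := ip_linear 1 0 0 z; rewrite scaler0 addr0 mul1r => h.
by apply/eqP; rewrite -(subrr (ip 0 z)) {2}h addrK.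
Qed.

Lemma ipDl x y z : ip (x + y) z = ip x z + ip y z.
Proof. by have := ip_linear 1 x y z; rewrite scale1r mul1r. Qed.

Lemma ipZl a x z : ip (a *: x) z = a * ip x z.
Proof. by rewrite -[_ *: x]addr0 ip_linear ip0l addr0. Qed.

Lemma ipBl x y z : ip (x - y) z = ip x z - ip y z.
Proof. by rewrite -scaleN1r addrC ip_linear mulN1r addrC. Qed.

Lemma ip_suml (T : Type) (s : seq T) (c : T -> R[i]) (f : T -> H) z :
  ip (\sum_(j <- s) c j *: f j) z = \sum_(j <- s) c j * ip (f j) z.
Proof.
elim: s => [|j s IH]; first by rewrite !big_nil ip0l.
by rewrite !big_cons ipDl ipZl IH.
Qed.

(* The [+ 1] spares the case distinction on [sqnorm ip y = 0]: expand
   [0 <= sqnorm ip (- ip x y *: y + (sqnorm ip y + 1) *: x)]. *)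
Lemma cabs2_ip_le x y : cabs2 (ip x y) <= (sqnorm ip y + 1) * sqnorm ip x.
Proof.
set z := ip x y; set t := sqnorm ip y + 1.
have := sqnorm_ge0 ((- z) *: y + t%:C%C *: x).
rewrite /sqnorm ip_linear ipZl (ip_conj _ y) (ip_conj _ x) !ip_linear !ipZl.
rewrite -/z (ip_conj x y) -/z.
have := sqnorm_ge0 x; have := sqnorm_ge0 y; rewrite /t /sqnorm /cabs2.
case: z => z1 z2; case: (ip x x) => p1 p2; case: (ip y y) => q1 q2 /=.
nra.
Qed.

Lemma cvg_sum_cabs2_ip (T : Type) (s : nat -> seq T) (f : T -> H) (g h : H) :
  (fun n => hnorm ip (\sum_(j <- s n) ip g (f j) *: f j - h)) @ \oo --> (0 : R) ->
  (fun n => \sum_(j <- s n) cabs2 (ip g (f j))) @ \oo --> complex.Re (ip h g).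
Proof.
pose u n := \sum_(j <- s n) ip g (f j) *: f j - h.
pose S n := \sum_(j <- s n) cabs2 (ip g (f j)); rewrite -/S => u_cvg0.
have ReE n : complex.Re (ip (u n) g) = S n - complex.Re (ip h g).
  have Re_additive := raddfB (@complex.Re R : Rcomplex R -> R).
  rewrite ipBl ip_suml Re_additive (raddf_sum (@complex.Re R : Rcomplex R -> R)).
  by congr (_ - _); apply: eq_bigr => j _; rewrite (ip_conj g); apply: Re_mul_conjc.
set k := Num.sqrt (sqnorm ip g + 1).
have dist_le n : `|S n - complex.Re (ip h g)| <= k * hnorm ip (u n).
  rewrite -ReE -sqrtr_sqr -sqrtrM ?addr_ge0 // ler_wsqrtr //.
  exact: le_trans (sqr_Re_le_cabs2 _) (cabs2_ip_le _ _).
apply: cvg_zero; apply: norm_cvg0.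
apply: (@squeeze_cvgr _ _ _ _ (cst 0) (fun n => k * hnorm ip (u n))).
- by apply: nearW => n; rewrite normr_ge0 dist_le.
- exact: cvg_cst.
- by rewrite -(mulr0 k); apply: cvgMl_tmp.
Qed.

Lemma expansion_Re_ip_in01 (T : eqType) (s : nat -> seq T) (f : T -> H)
    (g : H) (i : T) :
  (\forall n \near \oo, i \in s n) ->
  (fun n => hnorm ip (\sum_(j <- s n) ip g (f j) *: f j - f i)) @ \oo --> (0 : R) ->
  0 <= complex.Re (ip (f i) g) <= 1.
Proof.
move=> i_in_s /cvg_sum_cabs2_ip S_cvg; set c := complex.Re (ip (f i) g).
have S_ge0 : \forall n \near \oo, 0 <= \sum_(j <- s n) cabs2 (ip g (f j)).
  by apply: nearW => n; apply: sumr_ge0 => j _; apply: cabs2_ge0.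
have S_ge_sqr : \forall n \near \oo, c ^+ 2 <= \sum_(j <- s n) cabs2 (ip g (f j)).
  near=> n; have i_in : i \in s n by near: n.
  rewrite (big_rem _ i_in) /= -lerBlDl.
  rewrite [ip g (f i)]ip_conj cabs2_conjc.
  have := sqr_Re_le_cabs2 (ip (f i) g).
  have : 0 <= \sum_(j <- rem i (s n)) cabs2 (ip g (f j)).
    by apply: sumr_ge0 => j _; apply: cabs2_ge0.
  lra.
have c_ge0 : 0 <= c by apply: cvgr_to_ge S_cvg S_ge0.
have : c ^+ 2 <= c by apply: cvgr_to_ge S_cvg S_ge_sqr.
by rewrite c_ge0 /=; nra.
Unshelve. all: by end_near.
Qed.

End InnerProduct.

Section limn_inf_bounded.
Context {R : realType}.
Implicit Types (r : R) (u v : R^o^nat).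

Lemma bounded_is_cvg_infs u : bounded_fun u -> cvgn (infs u).
Proof.
move=> u_bd; apply: nondecreasing_is_cvgn; last exact: bounded_fun_has_ubound_infs.
exact/nondecreasing_infs/bounded_fun_has_lbound.
Qed.

Lemma bounded_is_cvg_sups u : bounded_fun u -> cvgn (sups u).
Proof.
move=> u_bd; apply: nonincreasing_is_cvgn; last exact: bounded_fun_has_lbound_sups.
exact/nonincreasing_sups/bounded_fun_has_ubound.
Qed.

Lemma limn_inf_ge r u : bounded_fun u -> (forall n, r <= u n) -> r <= limn_inf u.
Proof.
move=> u_bd r_le; apply: limr_ge; first exact: bounded_is_cvg_infs.
apply: nearW => n; apply: lb_le_inf; first by exists (u n), n => /=.
by move=> _ [k _ <-].
Qed.

Lemma bounded_limn_inf_sup u : bounded_fun u -> limn_inf u <= limn_sup u.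
Proof.
move=> u_bd; apply: ler_lim.
- exact: bounded_is_cvg_infs.
- exact: bounded_is_cvg_sups.
apply: nearW => n; apply: (@le_trans _ _ (u n)).
- apply: ge_inf; last by exists n => /=.
  by apply: has_lbound_sdrop; exact: bounded_fun_has_lbound.
- apply: ub_le_sup; last by exists n => /=.
  by apply: has_ubound_sdrop; exact: bounded_fun_has_ubound.
Qed.

Lemma near_eq_limn_inf u v :
  (\forall n \near \oo, u n = v n) -> limn_inf u = limn_inf v.
Proof.
move=> [N _ uv]; rewrite /limn_inf; congr lim.
have infs_eq : \forall n \near \oo, infs u n = infs v n.
  exists N => // n /= Nn; rewrite /infs /=; congr inf.
  apply/seteqP; split=> _ [k /= nk <-]; exists k => //=.
    by rewrite uv //= (leq_trans Nn).
  by rewrite uv //= (leq_trans Nn).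
by apply/seteqP; split; apply: near_eq_cvg; [|apply: filterS infs_eq] => //.
Qed.

Lemma bounded_limn_infDr u r :
  bounded_fun u -> limn_inf (fun n => u n + r) = limn_inf u + r.
Proof.
move=> u_bd; have cst_bd (k : R) : bounded_fun (fun _ : nat => k : R^o).
  exact: bounded_cst.
have [limn_inf_cst _] := cvg_limn_inf_sup (cvg_cst r).
apply/eqP; rewrite eq_le; apply/andP; split; last first.
  by have := le_limn_infD u_bd (cst_bd r); rewrite limn_inf_cst.
have := le_limn_infD (bounded_funD u_bd (cst_bd r)) (cst_bd (- r)).
have [-> _] := cvg_limn_inf_sup (cvg_cst (- r)).
have -> : u \+ (fun=> r) \+ (fun=> - r) = u by apply/funext => n /=; rewrite addrK.
by rewrite lerBlDr.
Qed.

Lemma bounded_limn_infN u : bounded_fun u -> limn_inf (fun n => - u n) = - limn_sup u.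
Proof.
move=> u_bd; rewrite /limn_inf -[fun n => - u n]/(-%R \o u) infsN.
by rewrite limN //; exact: bounded_is_cvg_sups.
Qed.

End limn_inf_bounded.

Lemma big_fset_subset {R : nmodType} {I : choiceType} {A B : {fset I}} (c : I -> R) :
  (A `<=` B)%fset -> \sum_(i <- B) c i = \sum_(i <- A) c i + \sum_(i <- (B `\` A)%fset) c i.
Proof.
move=> AB; rewrite (big_fsetID _ (mem A)); congr (_ + _); apply: eq_fbigl => x.
  by rewrite !inE /= andb_idl // => /(fsubsetP AB).
by rewrite !inE /= andbC.
Qed.

Lemma sum_fset_in01 {R : realDomainType} {I : choiceType} (A : {fset I}) (c : I -> R) :
  (forall i, 0 <= c i <= 1) -> 0 <= \sum_(i <- A) c i <= (#|` A|)%fset%:R.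
Proof.
move=> c01; rewrite sumr_ge0 /=; last by move=> i _; case/andP: (c01 i).
rewrite -sum1_size natr_sum ler_sum // => i _; by case/andP: (c01 i).
Qed.

Section Exhaustion.
Context {R : realType} {I : choiceType} {J : nat -> {fset I}}.
Hypothesis J_mono : forall n, (J n `<=` J n.+1)%fset.

Lemma J_homo : {homo J : n k / (n <= k)%N >-> (n `<=` k)%fset}.
Proof. by apply: homo_leq J_mono => [A|B A C AB BC]; [exact: fsubset_refl|exact: fsubset_trans AB BC]. Qed.

Lemma mem_J_near {i n} : i \in J n -> \forall k \near \oo, i \in J k.
Proof. by move=> iJ; exists n => // k /= nk; apply: (fsubsetP (J_homo _ _ nk)). Qed.

Lemma cardJ_neq0_near {i n} : i \in J n -> \forall k \near \oo, cardJ J k != 0 :> R.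
Proof.
move=> /mem_J_near; apply: filterS => k iJ.
by rewrite /cardJ pnatr_eq0 cardfs_eq0; apply/fset0Pn; exists i.
Qed.

Lemma cardJ_succ_diff n : (#|` J n.+1 `\` J n|)%fset%:R = cardJ J n.+1 - cardJ J n :> R.
Proof. by rewrite cardfsDS // natrB // fsubset_leq_card. Qed.

Lemma frame_compatible_cardJ : frame_compatible J (@cardJ R I J).
Proof.
split=> [|n]; first by rewrite lexx ler0n.
by rewrite -cardJ_succ_diff ler0n lexx.
Qed.

Lemma frame_compatible_sum (c : I -> R) :
  (forall i, 0 <= c i <= 1) -> frame_compatible J (fun n => \sum_(i <- J n) c i).
Proof.
move=> c01; split=> [|n]; first exact: sum_fset_in01.
by rewrite (big_fset_subset _ (J_mono n)) addrAC subrr add0r sum_fset_in01.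
Qed.

Lemma frame_compatible_le_cardJ (x : nat -> R) :
  frame_compatible J x -> forall n, 0 <= x n <= cardJ J n.
Proof.
move=> [x0 x_incr]; elim=> // n /andP[xn_ge0 xn_le].
have /andP[] := x_incr n; rewrite cardJ_succ_diff => x_incr_ge0 x_incr_le.
by apply/andP; split; lra.
Qed.

End Exhaustion.

Definition average {R : realType} {I : choiceType} (J : nat -> {fset I})
  (x : nat -> R) (n : nat) : R := x n / cardJ J n.

Section SeqMeasure.
Context {R : realType} {I : choiceType} {J : nat -> {fset I}} {W : topologicalType}.
Context {m : (nat -> R) -> W -> R}.
Hypothesis J_mono : forall n, (J n `<=` J n.+1)%fset.
Hypothesis cardJ_neq0 : \forall n \near \oo, cardJ J n != 0 :> R.
Hypothesis m_seq_measure : is_seq_measure J m.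

Implicit Types (x : nat -> R) (r : R).

Lemma XP_frame_compatible x : frame_compatible J x -> XP J x.
Proof. by move=> x_fc; exists x, 1; split=> //; apply/funext => n; rewrite mul1r. Qed.

Lemma XR_XP x : XP J x -> XR J x.
Proof.
move=> x_XP; exists x, (fun=> 0); split=> //; last by apply/funext => n; rewrite subr0.
have [y [_ [y_fc _ _]]] := x_XP.
by exists y, 0; split=> //; apply/funext => n; rewrite mul0r.
Qed.

Lemma XP_scale_cardJ r : 0 <= r -> XP J (fun n => r * cardJ J n).
Proof. by move=> r_ge0; exists (cardJ J), r; split=> //; exact: frame_compatible_cardJ. Qed.

Lemma seq_measure_scale_cardJ r : m (fun n => r * cardJ J n) = fun=> r.
Proof.
have [_ m_lin _ _ m_cardJ] := m_seq_measure.
have cardJ_XR : XR J (cardJ J : nat -> R).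
  exact/XR_XP/XP_frame_compatible/frame_compatible_cardJ.
have := m_lin _ _ r 0 cardJ_XR cardJ_XR; rewrite m_cardJ.
under eq_fun do rewrite mul0r addr0; move=> ->.
by apply/funext => w; rewrite mul0r addr0 mulr1.
Qed.

Lemma average_scale_cardJ_near x r :
  \forall n \near \oo, (x n - r * cardJ J n) / cardJ J n = average J x n - r.
Proof.
by apply: filterS cardJ_neq0 => n cardJ_n; rewrite mulrBl -mulrA divff ?mulr1.
Qed.

Lemma seq_measure_inhabited : [set: W] !=set0.
Proof.
apply/set0P/eqP => W0; have [_ _ m_approx _ _] := m_seq_measure.
have cardJ_XR : XR J (cardJ J : nat -> R).
  exact/XR_XP/XP_frame_compatible/frame_compatible_cardJ.
have zero_XR : XR J (fun n => 0 * cardJ J n : R) by apply/XR_XP/XP_scale_cardJ.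
have /(m_approx _ _ zero_XR cardJ_XR) approx :
    m (fun n => 0 * cardJ J n) = m (cardJ J).
  by apply/funext => w; have : [set: W] w by []; rewrite W0.
have : (0 : R) <= -1.
  apply: (cvgr_to_le approx); apply: filterS cardJ_neq0 => n cardJ_n.
  by rewrite /= mul0r sub0r mulNr divff.
by rewrite ler0N1.
Qed.

Section FrameCompatible.
Context {x : nat -> R}.
Hypothesis x_fc : frame_compatible J x.

Lemma average_in01 n : 0 <= average J x n <= 1.
Proof.
have /andP[xn_ge0 xn_le] := frame_compatible_le_cardJ J_mono _ x_fc n.
have [cardJ0|cardJ_gt0] := eqVneq (cardJ J n : R) 0.
  by rewrite /average cardJ0 invr0 mulr0 lexx ler01.
rewrite divr_ge0 ?ler_pdivrMr ?mul1r //=.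
by rewrite lt0r cardJ_gt0 (le_trans xn_ge0).
Qed.

Lemma bounded_average : bounded_fun (average J x).
Proof.
rewrite /bounded_near; near=> M => n _ /=; have /andP[a_ge0 a_le1] := average_in01 n.
rewrite ger0_norm //; apply: le_trans a_le1 _; near: M.
by apply: nbhs_pinfty_ge; rewrite num_real.
Unshelve. all: by end_near.
Qed.

Lemma seq_measure_ge_cst r : 0 <= r ->
  (forall w, r <= m x w) <-> r <= limn_inf (average J x).
Proof.
move=> r_ge0; have [_ _ _ m_le _] := m_seq_measure.
have r_XP : XP J (fun n => r * cardJ J n) by exact: XP_scale_cardJ.
have x_XP : XP J x by exact: XP_frame_compatible.
have -> : (forall w, r <= m x w) <-> (forall w, m (fun n => r * cardJ J n) w <= m x w).
  by rewrite seq_measure_scale_cardJ.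
rewrite (m_le _ _ r_XP x_XP) /seq_leqq.
rewrite (near_eq_limn_inf _ _ (average_scale_cardJ_near x r)).
by rewrite bounded_limn_infDr ?subr_ge0 //; exact: bounded_average.
Qed.

Lemma seq_measure_le_cst r : 0 <= r ->
  (forall w, m x w <= r) <-> limn_sup (average J x) <= r.
Proof.
move=> r_ge0; have [_ _ _ m_le _] := m_seq_measure.
have r_XP : XP J (fun n => r * cardJ J n) by exact: XP_scale_cardJ.
have x_XP : XP J x by exact: XP_frame_compatible.
have -> : (forall w, m x w <= r) <-> (forall w, m x w <= m (fun n => r * cardJ J n) w).
  by rewrite seq_measure_scale_cardJ.
rewrite (m_le _ _ x_XP r_XP) /seq_leqq.
have r_sub_avg : \forall n \near \oo,
    (r * cardJ J n - x n) / cardJ J n = - average J x n + r.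
  apply: filterS (average_scale_cardJ_near x r) => n.
  by move=> avg_sub_r; rewrite -opprB mulNr avg_sub_r opprB addrC.
rewrite (near_eq_limn_inf _ _ r_sub_avg) bounded_limn_infDr; last first.
  exact/bounded_funN/bounded_average.
by rewrite bounded_limn_infN 1?addrC ?subr_ge0 //; exact: bounded_average.
Qed.

Lemma limn_inf_average_ge0 : 0 <= limn_inf (average J x).
Proof.
by apply: limn_inf_ge bounded_average _ => n; have /andP[] := average_in01 n.
Qed.

Lemma seq_measure_between w :
  limn_inf (average J x) <= m x w <= limn_sup (average J x).
Proof.
have U_ge0 := le_trans limn_inf_average_ge0 (bounded_limn_inf_sup _ bounded_average).
rewrite ((seq_measure_ge_cst _ limn_inf_average_ge0).2 (lexx _)).
by rewrite ((seq_measure_le_cst _ U_ge0).2 (lexx _)).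
Qed.

Theorem seq_measure_range : compact [set: W] ->
  [/\ forall c, average J x @ \oo --> c -> m x = (fun=> c),
      (forall w, limn_inf (average J x) <= m x w <= limn_sup (average J x)),
      (exists v, m x v = limn_inf (average J x))
    & (exists w, m x w = limn_sup (average J x))].
Proof.
move=> W_compact; have [m_cont _ _ _ _] := m_seq_measure.
have mx_cont : {within [set: W], continuous (m x)}.
  exact/continuous_subspaceT/m_cont/XR_XP/XP_frame_compatible.
have mx_ge0 w : 0 <= m x w.
  exact: le_trans limn_inf_average_ge0 (andP (seq_measure_between w)).1.
split; first 2 last.
- have [v _ v_min] := compact_EVT_min seq_measure_inhabited W_compact mx_cont.
  exists v; apply/le_anti; rewrite (andP (seq_measure_between v)).1 andbT.
  by apply/(seq_measure_ge_cst _ (mx_ge0 v)) => w; apply: v_min; rewrite in_setT.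
- have [v _ v_max] := compact_EVT_max seq_measure_inhabited W_compact mx_cont.
  exists v; apply/le_anti; rewrite (andP (seq_measure_between v)).2 /=.
  by apply/(seq_measure_le_cst _ (mx_ge0 v)) => w; apply: v_max; rewrite in_setT.
- move=> c /cvg_limn_inf_sup[L_eq U_eq]; apply/funext => w.
  by apply/le_anti; have := seq_measure_between w; rewrite L_eq U_eq andbC.
- exact: seq_measure_between.
Qed.

End FrameCompatible.

End SeqMeasure.

Lemma frame_compatible_frame_b {R : realType} {H : lmodType R[i]} {ip : H -> H -> R[i]}
    {I : choiceType} {J : nat -> {fset I}} {f ft : I -> H} :
  is_separable_hilbert ip -> (forall n, (J n `<=` J n.+1)%fset) ->
  (forall i, exists n, i \in J n) -> is_canonical_dual ip J f ft ->
  frame_compatible J (frame_b ip J f ft).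
Proof.
move=> [[ip_linear ip_conj] sqnorm_ge0 _ _ _] J_mono J_cover ft_dual.
apply: (frame_compatible_sum J_mono (fun i => complex.Re (ip (f i) (ft i)))) => i.
have [n i_in] := J_cover i.
apply: (@expansion_Re_ip_in01 _ _ _ ip_linear ip_conj sqnorm_ge0 _ (fun n => J n : seq I)).
  exact: (mem_J_near J_mono i_in : \forall k \near \oo, i \in (J k : seq I)).
exact: (ft_dual i).2.
Qed.

Theorem proposition5p13 (R : realType) (H : lmodType R[i]) (ip : H -> H -> R[i])
    (I : choiceType) (J : nat -> {fset I}) (W : topologicalType)
    (m : (nat -> R) -> W -> R) (f ft : I -> H) :
  is_separable_hilbert ip ->
  (exists i0 : I, True) ->
  (forall n, (J n `<=` J n.+1)%fset) ->
  (forall i : I, exists n, i \in J n) ->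
  compact [set: W] -> hausdorff_space W ->
  is_seq_measure J m ->
  is_frame_for_span ip f ->
  is_canonical_dual ip J f ft ->
  let b := frame_b ip J f ft in
  let a := fun n => b n / cardJ J n in
  [/\ (forall c : R, a @ \oo --> c -> m b = (fun _ => c)),
      (forall w : W, limn_inf a <= m b w <= limn_sup a),
      (exists v : W, m b v = limn_inf a)
    & (exists w : W, m b w = limn_sup a)].
Proof.
move=> hilbert [i0 _] J_mono J_cover W_compact _ m_measure _ ft_dual b a.
have [n0 i0_in] := J_cover i0.
have b_fc : frame_compatible J b.
  exact: frame_compatible_frame_b hilbert J_mono J_cover ft_dual.
exact: (seq_measure_range J_mono (cardJ_neq0_near J_mono i0_in) m_measure b_fc W_compact).
Qed.
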